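(* Let $G=\mathbb{Z}_2\times\mathbb{Z}_2\times\mathbb{Z}_2=\langle x_1\rangle\times\langle x_2\rangle\times\langle x_3\rangle$ and $\Phi(x_1^{i_1}x_2^{i_2}x_3^{i_3},x_1^{j_1}x_2^{j_2}x_3^{j_3},x_1^{k_1}x_2^{k_2}x_3^{k_3})=\prod_{l=1}^3(-1)^{i_l[\frac{j_l+k_l}{2}]}$ ($i_l,j_l,k_l\in\{0,1\}$). Let $\{\chi_1,\dots,\chi_N\}$, $N\ge3$, be an admissible series of quasi-characters of $G$ with respect to $\Phi$, where $\chi_i$ is associated to $\widetilde\Phi_{x_i}$ for elements $x_1,\dots,x_N\in G\setminus\{1\}$, the first three of which are the generators $x_1,x_2,x_3$. Then, after permuting the indices $4,\dots,N$, one of the following holds: (1) $3\le N\le6$ and $x_4,\dots,x_N$ are distinct elements of $\{x_1,x_2,x_3\}$; (2) $N\ge5$, $x_4=x_k$ for some $k\in\{1,2,3\}$, and writing $\{i,j\}=\{1,2,3\}\setminus\{k\}$, $\chi_i(x_i)=\chi_j(x_j)$ and $x_5=\cdots=x_N=x_ix_j$; (3) $N\ge4$ and there are $1\le i<j\le3$ with $x_4=\cdots=x_N=x_ix_j$ and $\chi_i(x_i)=\chi_j(x_j)$; (4) $N\ge4$, $x_4=x_1x_2x_3$, and there are $1\le i<j\le3$ with $x_5=\cdots=x_N=x_ix_j$ and $\chi_i(x_i)=\chi_j(x_j)$.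
   Context: $\mathbbm{k}$ algebraically closed of characteristic $0$; $[x]$ the integer part. $\widetilde\Phi_g(e,f)=\frac{\Phi(g,e,f)\Phi(e,f,g)}{\Phi(e,g,f)}$. A quasi-character associated to a 2-cocycle $\omega$ is $\chi:G\to\mathbbm{k}^*$ with $\chi(1)=1$ and $\chi(f)\chi(g)=\omega(f,g)\chi(fg)$. A series $\{\chi_1,\dots,\chi_N\}$ is admissible with respect to $\Phi$ if $\chi_i$ is associated to $\widetilde\Phi_{x_i}$ with $x_i\ne1$, $G=\langle x_1,\dots,x_N\rangle$, $\chi_i(x_j)\chi_j(x_i)=1$ for all $i\ne j$, and $\chi_i(x_i)\ne1$ for all $i$. (Given $\chi_1,\chi_2,\chi_3$, each $\chi_j$ with $j\ge4$ is determined by its degree $x_j$; the paper phrases conditions such as $x_j=x_k$, $x_j=x_ix_j'$ as equalities of quasi-characters $\chi_j=\chi'_k$, $\chi_j=\chi_{ij}$, $\chi_j=\chi_{123}$.) *)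

From mathcomp Require Import all_boot all_algebra.
Set Implicit Arguments. Unset Strict Implicit. Unset Printing Implicit Defensive.
Import GRing.Theory.
Local Open Scope ring_scope.

(* G = Z_2 x Z_2 x Z_2, an element x1^i1 x2^i2 x3^i3 is the triple (i1,i2,i3) of bits. *)
Definition G := (bool * bool * bool)%type.
Definition c1 (a : G) : bool := a.1.1.
Definition c2 (a : G) : bool := a.1.2.
Definition c3 (a : G) : bool := a.2.
Definition mulG (a b : G) : G :=
  (xorb (c1 a) (c1 b), xorb (c2 a) (c2 b), xorb (c3 a) (c3 b)).
Definition oneG : G := (false, false, false).
Definition gx1 : G := (true, false, false).
Definition gx2 : G := (false, true, false).
Definition gx3 : G := (false, false, true).

Definition Phi (k : fieldType) (a b c : G) : k :=
  (-1) ^+ (c1 a * ((c1 b + c1 c) %/ 2))%N *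
  (-1) ^+ (c2 a * ((c2 b + c2 c) %/ 2))%N *
  (-1) ^+ (c3 a * ((c3 b + c3 c) %/ 2))%N.

Definition tPhi (k : fieldType) (g : G) (e f : G) : k :=
  Phi k g e f * Phi k e f g / Phi k e g f.

Definition quasi_char (k : fieldType) (omega : G -> G -> k) (chi : G -> k) : Prop :=
  chi oneG = 1 /\ forall f g, chi f * chi g = omega f g * chi (mulG f g).

Definition prodG (x : nat -> G) (s : seq nat) : G := foldr (fun i a => mulG (x i) a) oneG s.

(* G = < x_0, ..., x_{N-1} > (G abelian of exponent 2: every element is a product of some x_i) *)
Definition generates (N : nat) (x : nat -> G) : Prop :=
  forall g : G, exists s : seq nat, all (fun i => i < N)%N s /\ g = prodG x s.

(* {chi_0, ..., chi_{N-1}} (0-based) is admissible w.r.t. Phi with degrees x_i *)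
Definition admissible (k : fieldType) (N : nat) (x : nat -> G) (chi : nat -> G -> k) : Prop :=
  [/\ forall i, (i < N)%N -> quasi_char (tPhi k (x i)) (chi i),
      forall i, (i < N)%N -> x i <> oneG,
      generates N x,
      forall i j, (i < N)%N -> (j < N)%N -> i <> j -> chi i (x j) * chi j (x i) = 1
    & forall i, (i < N)%N -> chi i (x i) <> 1].

(* A quasi-character for \tilde\Phi_g is multiplicative on elements with
   disjoint supports, so it is determined by its values on the generators, and
   chi(x_l)^2 = -1 exactly when x_l lies in the support of g.  Expanding the
   admissibility condition chi_j(x_j') chi_j'(x_j) = 1 (j, j' >= 4) over the
   generators turns it into (-1)^<x_j, x_j'> = 1 for the standard dot product of
   F_2^3; since -1 != 1, the degrees x_4, ..., x_N are pairwise orthogonal.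
   If x_j = x_a x_b, then chi_a(x_a) and chi_b(x_b) are square roots of -1 whose
   product is not 1 (it is the inverse of chi_j(x_j) != 1), so they are equal.
   What remains is the geometry of pairwise orthogonal nonzero vectors of F_2^3:
   the isotropic ones are the x_a x_b, two of them are orthogonal only if they
   are equal, two anisotropic vectors orthogonal to the same isotropic one are
   not orthogonal to each other, and x_1 x_2 x_3 is orthogonal to no anisotropic
   vector. *)

From mathcomp Require Import all_boot all_algebra ring zify.
Import GRing.Theory.
Set Implicit Arguments. Unset Strict Implicit. Unset Printing Implicit Defensive.
Local Open Scope ring_scope.

Definition genG (l : nat) : G :=
  match l with 0%N => gx1 | 1%N => gx2 | _ => gx3 end.
Definition coordG (l : nat) (e : G) : bool :=
  match l with 0%N => c1 e | 1%N => c2 e | _ => c3 e end.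
Definition gx123 : G := mulG gx1 (mulG gx2 gx3).

Definition meet3 (g e f : G) : nat :=
  [&& c1 g, c1 e & c1 f] + [&& c2 g, c2 e & c2 f] + [&& c3 g, c3 e & c3 f].

Definition dot (e f : G) : bool :=
  (c1 e && c1 f) (+) (c2 e && c2 f) (+) (c3 e && c3 f).

Lemma meet3_rot g e f : meet3 e f g = meet3 g e f.
Proof. by case: g => [[[] []] []]; case: e => [[[] []] []]; case: f => [[[] []] []]. Qed.

Lemma meet3_swap g e f : meet3 e g f = meet3 g e f.
Proof. by case: g => [[[] []] []]; case: e => [[[] []] []]; case: f => [[[] []] []]. Qed.

Lemma meet3_genG g a b : (a < 3)%N -> (b < 3)%N -> a != b ->
  meet3 g (genG a) (genG b) = 0%N.
Proof. by case: a => [|[|[|]]] //; case: b => [|[|[|]]] //; rewrite /meet3 /= ?andbF. Qed.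

Section Signs.
Variable k : fieldType.

Lemma PhiE g e f : Phi k g e f = (-1) ^+ meet3 g e f.
Proof.
have bit (a b c : bool) : (-1 : k) ^+ (a * ((b + c) %/ 2)) = (-1) ^+ [&& a, b & c].
  by case: a; case: b; case: c.
by rewrite /Phi !bit -!exprD.
Qed.

Lemma tPhiE g e f : tPhi k g e f = (-1) ^+ meet3 g e f.
Proof. by rewrite /tPhi !PhiE (meet3_rot g) (meet3_swap g) mulfK ?signr_eq0. Qed.

Lemma prod_sign_dot (u v : G) :
  \prod_(l < 3 | coordG l v) \prod_(m < 3 | coordG m u) (-1) ^+ (l == m :> nat)
    = (-1) ^+ dot u v :> k.
Proof.
rewrite big_mkcond !big_ord_recr big_ord0 /=.
rewrite !(big_mkcond (fun m : 'I_3 => coordG m u)) !big_ord_recr !big_ord0 /=.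
by case: u => [[[] []] []]; case: v => [[[] []] []]; rewrite /= ?(expr0, expr1, mul1r, mulr1, mulrNN).
Qed.

End Signs.

Section QuasiCharacter.
Variables (k : fieldType) (g : G) (chi : G -> k).
Hypothesis qchi : quasi_char (tPhi k g) chi.

Lemma quasi_char_mul e f : meet3 g e f = 0%N -> chi (mulG e f) = chi e * chi f.
Proof. by case: qchi => _ hmul hm; rewrite hmul tPhiE hm mul1r. Qed.

Lemma quasi_char_sqr e : chi e * chi e = (-1) ^+ meet3 g e e.
Proof.
case: qchi => h1 ->; rewrite tPhiE.
have -> : mulG e e = oneG by case: e => [[[] []] []].
by rewrite h1 mulr1.
Qed.

Lemma quasi_char_prod_gen e : chi e = \prod_(l < 3 | coordG l e) chi (genG l).
Proof.
have m12 : chi (mulG gx1 gx2) = chi gx1 * chi gx2.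
  by apply: quasi_char_mul; rewrite /meet3 /= !andbF.
have m13 : chi (mulG gx1 gx3) = chi gx1 * chi gx3.
  by apply: quasi_char_mul; rewrite /meet3 /= !andbF.
have m23 : chi (mulG gx2 gx3) = chi gx2 * chi gx3.
  by apply: quasi_char_mul; rewrite /meet3 /= !andbF.
have m123 : chi (mulG gx1 (mulG gx2 gx3)) = chi gx1 * chi (mulG gx2 gx3).
  by apply: quasi_char_mul; rewrite /meet3 /= !andbF.
case: qchi => h1 _; rewrite big_mkcond !big_ord_recr big_ord0 /= mul1r.
case: e => [[[] []] []]; rewrite /= ?mul1r ?mulr1 //.
all: first [by rewrite [LHS]m12 | by rewrite [LHS]m13 | by rewrite [LHS]m23
           | by rewrite [LHS]m123 m23 mulrA].
Qed.

End QuasiCharacter.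

Section SqrtNeg1.
Variable R : idomainType.

Lemma sqrt_neg1_eq_or_opp (p q : R) : p ^+ 2 = -1 -> q ^+ 2 = -1 -> p = q \/ p = - q.
Proof.
move=> hp hq; have /orP[/eqP|/eqP] : (p == q) || (p == - q) by rewrite -eqf_sqr hp hq.
  by left.
by right.
Qed.

Lemma sqrt_neg1_eq (p q w : R) :
  p ^+ 2 = -1 -> q ^+ 2 = -1 -> p * q * w = 1 -> w != 1 -> p = q.
Proof.
move=> hp hq hw; case: (sqrt_neg1_eq_or_opp hp hq) => // pq.
by move: hw; rewrite pq mulNr -expr2 hq opprK mul1r => ->; rewrite eqxx.
Qed.

Lemma sqrt_neg1_pigeonhole (p : nat -> R) : (forall i, (i < 3)%N -> p i ^+ 2 = -1) ->
  exists i j, (i < j < 3)%N /\ p i = p j.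
Proof.
move=> hp; have [p01|p01] := sqrt_neg1_eq_or_opp (hp 0%N erefl) (hp 1%N erefl).
  by exists 0%N, 1%N.
have [p02|p02] := sqrt_neg1_eq_or_opp (hp 0%N erefl) (hp 2%N erefl).
  by exists 0%N, 2%N.
by exists 1%N, 2%N; split=> //; apply: oppr_inj; rewrite -p01 -p02.
Qed.

End SqrtNeg1.

Section AdmissibleSeries.
Variables (k : fieldType) (N : nat) (x : nat -> G) (chi : nat -> G -> k).
Hypotheses (hN : (3 <= N)%N) (hgen : forall l, (l < 3)%N -> x l = genG l).
Hypothesis adm : admissible N x chi.

Lemma admissible_quasi_char i : (i < N)%N -> quasi_char (tPhi k (x i)) (chi i).
Proof. by case: adm => + _ _ _ _; apply. Qed.

Lemma admissible_compat i j : (i < N)%N -> (j < N)%N -> i <> j ->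
  chi i (x j) * chi j (x i) = 1.
Proof. by case: adm => _ _ _ + _; apply. Qed.

Lemma admissible_compat_gen i l : (3 <= i < N)%N -> (l < 3)%N ->
  chi i (x l) * chi l (x i) = 1.
Proof.
move=> /andP[i3 iN] l3; apply: admissible_compat => //; first exact: leq_trans l3 hN.
by move=> il; move: l3; rewrite -il ltnNge i3.
Qed.

Lemma admissible_prod_gen i e : (i < N)%N ->
  chi i e = \prod_(l < 3 | coordG l e) chi i (x l).
Proof.
move=> iN; rewrite (quasi_char_prod_gen (admissible_quasi_char iN)).
by apply: eq_bigr => l _; rewrite hgen.
Qed.

Lemma admissible_pairing_gen l m : (l < 3)%N -> (m < 3)%N ->
  chi l (x m) * chi m (x l) = (-1) ^+ (l == m).
Proof.
move=> l3 m3; have [<-|lm] := eqVneq l m; last first.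
  by apply: admissible_compat; rewrite ?(leq_trans _ hN) //; apply/eqP.
rewrite (quasi_char_sqr (admissible_quasi_char (leq_trans l3 hN))) hgen //.
by case: l l3 {m3} => [|[|[|]]].
Qed.

Lemma admissible_dot_prod j j' : (3 <= j < N)%N -> (3 <= j' < N)%N -> j <> j' ->
  (-1) ^+ dot (x j) (x j') = 1 :> k.
Proof.
move=> hj hj' jj'; have /andP[_ jN] := hj; have /andP[_ j'N] := hj'.
set u := x j; set v := x j'.
(* E is the inverse of chi_j(v) chi_j'(u); expanded over the generators it is
   the sign (-1)^<u,v>. *)
set E := \prod_(l < 3 | coordG l v) chi l u * \prod_(m < 3 | coordG m u) chi m v.
have E1 : chi j v * chi j' u * E = 1.
  rewrite /E mulrACA (admissible_prod_gen _ jN) (admissible_prod_gen _ j'N) -!big_split.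
  by rewrite !big1 ?mulr1 // => l _; apply: admissible_compat_gen.
have E_sign : E = (-1) ^+ dot u v.
  rewrite -(prod_sign_dot k u v) /E.
  rewrite (eq_bigr (fun l : 'I_3 => \prod_(m < 3 | coordG m u) chi l (x m))); last first.
    by move=> l _; apply: admissible_prod_gen; rewrite (leq_trans _ hN).
  rewrite [X in _ * X](eq_bigr (fun m : 'I_3 => \prod_(l < 3 | coordG l v) chi m (x l))); last first.
    by move=> m _; apply: admissible_prod_gen; rewrite (leq_trans _ hN).
  rewrite [X in _ * X]exchange_big -big_split; apply: eq_bigr => l _.
  by rewrite -big_split; apply: eq_bigr => m _; apply: admissible_pairing_gen.
by rewrite -E_sign -E1 admissible_compat // mul1r.
Qed.

Lemma admissible_sqr_gen l : (l < 3)%N -> chi l (x l) ^+ 2 = -1.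
Proof. by move=> l3; rewrite expr2 admissible_pairing_gen // eqxx. Qed.

Lemma admissible_dot j j' : (-1 : k) != 1 ->
  (3 <= j < N)%N -> (3 <= j' < N)%N -> j <> j' -> ~~ dot (x j) (x j').
Proof.
move=> neg1 hj hj' jj'; have := admissible_dot_prod hj hj' jj'.
by case: dot => // /eqP; rewrite (negbTE neg1).
Qed.

Lemma admissible_pair_eq j a b : (3 <= j < N)%N -> (a < 3)%N -> (b < 3)%N -> a != b ->
  x j = mulG (x a) (x b) -> chi a (x a) = chi b (x b).
Proof.
move=> hj a3 b3 ab xj; have /andP[_ jN] := hj.
have aN := leq_trans a3 hN; have bN := leq_trans b3 hN.
have split_j i : (i < N)%N -> chi i (x j) = chi i (x a) * chi i (x b).
  move=> iN; rewrite xj; apply: (quasi_char_mul (admissible_quasi_char iN)).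
  by rewrite (hgen a3) (hgen b3) meet3_genG.
apply: (sqrt_neg1_eq (w := chi j (x j))); rewrite ?admissible_sqr_gen //; last first.
  by apply/eqP; case: adm => _ _ _ _; apply.
have ab1 : chi a (x b) * chi b (x a) = 1.
  by rewrite admissible_pairing_gen // (negbTE ab).
have : chi a (x a) * chi b (x b) * chi j (x j) * (chi a (x b) * chi b (x a))
       = chi j (x a) * chi a (x j) * (chi j (x b) * chi b (x j)).
  by rewrite !split_j //; ring.
by rewrite ab1 !admissible_compat_gen // !mulr1.
Qed.

End AdmissibleSeries.

Lemma dot_gx123 e : dot gx123 e = dot e e.
Proof. by case: e => [[[] []] []]. Qed.

Lemma isotropic_eq e f : e != oneG -> f != oneG ->
  ~~ dot e e -> ~~ dot f f -> ~~ dot e f -> e = f.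
Proof. by case: e => [[[] []] []]; case: f => [[[] []] []]. Qed.

Lemma anisotropic_perp_dot q e f : q != oneG -> ~~ dot q q ->
  dot e e -> dot f f -> ~~ dot e q -> ~~ dot f q -> dot e f.
Proof.
by case: q => [[[] []] []]; case: e => [[[] []] []]; case: f => [[[] []] []].
Qed.

Lemma isotropic_genG_pair e : e != oneG -> ~~ dot e e ->
  exists a b, (a < b < 3)%N /\ e = mulG (genG a) (genG b).
Proof.
case: e => [[[] []] []] // _ _.
- by exists 0%N, 1%N.
- by exists 0%N, 2%N.
- by exists 1%N, 2%N.
Qed.

Lemma anisotropic_perp_genG_pair a b e : (a < b < 3)%N ->
  dot e e -> ~~ dot e (mulG (genG a) (genG b)) -> e = genG (3 - a - b) \/ e = gx123.
Proof.
case/andP; case: a => [|[|[|]]] //; case: b => [|[|[|]]] // _ _;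
  by case: e => [[[] []] []] // _ _; [right | left].
Qed.

Lemma anisotropic_genG e : dot e e -> e != gx123 -> exists2 l, (l < 3)%N & e = genG l.
Proof.
case: e => [[[] []] []] // _ _.
- by exists 0%N.
- by exists 1%N.
- by exists 2%N.
Qed.

Definition degree_classification (k : fieldType) (N : nat) (x : nat -> G) (p : nat -> k) :=
  exists s : nat -> nat,
    [/\ forall m, (m < 3)%N -> s m = m,
        forall m, (3 <= m < N)%N -> (3 <= s m < N)%N,
        forall m n, (m < N)%N -> (n < N)%N -> s m = s n -> m = n
      & let y := fun m => x (s m) in
        [\/ [/\ (N <= 6)%N,
                forall m, (3 <= m < N)%N -> y m = x 0%N \/ y m = x 1%N \/ y m = x 2%N
              & forall m n, (3 <= m < N)%N -> (3 <= n < N)%N -> y m = y n -> m = n],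
            (5 <= N)%N /\
            exists i j l : nat,
              [/\ [/\ (i < j < 3)%N, (l < 3)%N, l <> i & l <> j],
                  y 3%N = x l,
                  p i = p j
                & forall m, (4 <= m < N)%N -> y m = mulG (x i) (x j)],
            (4 <= N)%N /\
            exists i j : nat,
              [/\ (i < j < 3)%N,
                  forall m, (3 <= m < N)%N -> y m = mulG (x i) (x j)
                & p i = p j]
          | [/\ (4 <= N)%N,
                y 3%N = mulG (x 0%N) (mulG (x 1%N) (x 2%N))
              & exists i j : nat,
                [/\ (i < j < 3)%N,
                    forall m, (4 <= m < N)%N -> y m = mulG (x i) (x j)
                  & p i = p j]]]].

Definition swap3 (t m : nat) : nat := if m == 3%N then t else if m == t then 3%N else m.

Lemma mem_iota_subn i n m : (i <= n)%N -> (m \in iota i (n - i)) = (i <= m < n)%N.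
Proof. by move=> le_in; rewrite mem_iota subnKC. Qed.

Section Shapes.
Variables (k : fieldType) (N : nat) (x : nat -> G) (p : nat -> k).

Lemma distinct_gen_shape : (3 <= N)%N ->
  (forall m, (3 <= m < N)%N -> x m = x 0%N \/ x m = x 1%N \/ x m = x 2%N) ->
  (forall m n, (3 <= m < N)%N -> (3 <= n < N)%N -> x m = x n -> m = n) ->
  degree_classification N x p.
Proof.
move=> hN hval hinj; exists id; split=> //; apply: Or41; split=> //.
have : (size (map x (iota 3 (N - 3))) <= size [:: x 0%N; x 1%N; x 2%N])%N.
  apply: uniq_leq_size.
    by rewrite map_inj_in_uniq ?iota_uniq // => m n; rewrite !mem_iota_subn //; apply: hinj.
  move=> e /mapP[m]; rewrite mem_iota_subn // => /hval hm ->; rewrite !inE.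
  by case: hm => [->|[->|->]]; rewrite eqxx ?orbT.
by rewrite size_map size_iota /=; lia.
Qed.

Lemma pair_shape a b : (4 <= N)%N -> (a < b < 3)%N -> p a = p b ->
  (forall m, (3 <= m < N)%N -> x m = mulG (x a) (x b)) -> degree_classification N x p.
Proof. by move=> N4 ab pab hx; exists id; split=> //; apply: Or43; split=> //; exists a, b. Qed.

Lemma pair_except_shape a b t : (a < b < 3)%N -> p a = p b -> (3 <= t < N)%N ->
  (forall m, (3 <= m < N)%N -> m <> t -> x m = mulG (x a) (x b)) ->
  (5 <= N)%N /\ x t = x (3 - a - b)%N \/
  (4 <= N)%N /\ x t = mulG (x 0%N) (mulG (x 1%N) (x 2%N)) ->
  degree_classification N x p.
Proof.
move=> ab pab ht hx hxt; exists (swap3 t).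
have x_swap m : (4 <= m < N)%N -> x (swap3 t m) = mulG (x a) (x b).
  by move=> hm; apply: hx; rewrite /swap3; repeat case: eqP; lia.
have s3 : swap3 t 3 = t by rewrite /swap3 eqxx.
split=> [m|m|m n|]; try by rewrite /swap3; repeat case: eqP; lia.
rewrite /= s3; case: hxt => [[N5 xt]|[N4 xt]].
  apply: Or42; split=> //; exists a, b, (3 - a - b)%N.
  by split=> //; split; lia.
by apply: Or44; split=> //; exists a, b.
Qed.

Lemma gx123_shape : N = 4%N -> x 3%N = mulG (x 0%N) (mulG (x 1%N) (x 2%N)) ->
  (exists i j, (i < j < 3)%N /\ p i = p j) -> degree_classification N x p.
Proof.
move=> N4 x3 [i [j [ij pij]]]; exists id; split=> //; apply: Or44; split=> //; first lia.
by exists i, j; split=> // m; lia.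
Qed.

End Shapes.

Section Classification.
Variables (k : fieldType) (N : nat) (x : nat -> G) (p : nat -> k).
Hypotheses (hN : (3 <= N)%N) (hgen : forall l, (l < 3)%N -> x l = genG l).
Hypothesis hne : forall j, (3 <= j < N)%N -> x j != oneG.
Hypothesis horth : forall j j', (3 <= j < N)%N -> (3 <= j' < N)%N -> j <> j' ->
  ~~ dot (x j) (x j').
Hypothesis hsqr : forall i, (i < 3)%N -> p i ^+ 2 = -1.
Hypothesis hpair : forall j a b, (3 <= j < N)%N -> (a < 3)%N -> (b < 3)%N -> a != b ->
  x j = mulG (x a) (x b) -> p a = p b.

Lemma isotropic_degree_classification j0 : (3 <= j0 < N)%N -> ~~ dot (x j0) (x j0) ->
  degree_classification N x p.
Proof.
move=> hj0 iso; have [a [b [ab e0]]] := isotropic_genG_pair (hne hj0) iso.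
have a3 : (a < 3)%N by lia.
have b3 : (b < 3)%N by lia.
set P := mulG (x a) (x b); have xj0 : x j0 = P by rewrite e0 /P !hgen.
have pab : p a = p b by apply: hpair hj0 a3 b3 _ xj0; rewrite neq_ltn; case/andP: ab => ->.
have P1 : P != oneG by rewrite -xj0 hne.
have isoP : ~~ dot P P by rewrite -xj0.
have other j : (3 <= j < N)%N -> x j != P -> dot (x j) (x j) && ~~ dot (x j) P.
  move=> hj xjP; have jj0 : j <> j0 by move=> jj0; rewrite jj0 xj0 eqxx in xjP.
  have perp : ~~ dot (x j) (x j0) by apply: horth.
  rewrite -xj0 perp andbT; apply: contraLR xjP; rewrite negbK => iso_j.
  by apply/eqP; rewrite -xj0; apply: isotropic_eq (hne hj) (hne hj0) iso_j iso perp.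
have [/hasP[t]|/hasPn allP] := boolP (has (fun j => x j != P) (iota 3 (N - 3))).
  rewrite mem_iota_subn // => ht /(other _ ht) /andP[aniso_t perp_t].
  apply: (pair_except_shape ab pab ht).
    move=> j hj jt; apply/eqP/contraT => /(other _ hj) /andP[aniso_j perp_j].
    move: (horth hj ht jt).
    by rewrite (anisotropic_perp_dot P1 isoP aniso_j aniso_t perp_j perp_t).
  have tj0 : t <> j0 by move=> tj0; move: aniso_t; rewrite tj0 (negbTE iso).
  have perp_gen : ~~ dot (x t) (mulG (genG a) (genG b)) by rewrite -!hgen.
  have [xt|xt] := anisotropic_perp_genG_pair ab aniso_t perp_gen.
    by left; rewrite xt hgen; [split=> // |]; lia.
  by right; rewrite xt /gx123 !hgen //; split=> //; lia.
apply: (pair_shape (a := a) (b := b)) => //; first lia.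
by move=> m hm; apply/eqP/negbNE/allP; rewrite mem_iota_subn.
Qed.

Lemma anisotropic_degree_classification : (forall j, (3 <= j < N)%N -> dot (x j) (x j)) ->
  degree_classification N x p.
Proof.
move=> aniso.
have [/hasP[t]|/hasPn no123] := boolP (has (fun j => x j == gx123) (iota 3 (N - 3))).
  rewrite mem_iota_subn // => ht /eqP xt.
  have only_t j : (3 <= j < N)%N -> j = t.
    move=> hj; apply/eqP; apply: contraTT (aniso j hj) => jt.
    by rewrite -dot_gx123 -xt; apply: horth => //; apply/eqP; rewrite eq_sym.
  have N4 : N = 4%N by have := only_t 3%N; have := only_t N.-1; lia.
  apply: gx123_shape => //; first by rewrite (only_t 3%N) ?xt ?hgen //; lia.
  exact: sqrt_neg1_pigeonhole.
apply: distinct_gen_shape => // [m hm|m n hm hn xmn].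
  have [l l3 ->] := anisotropic_genG (aniso m hm) (no123 m ltac:(by rewrite mem_iota_subn)).
  by rewrite !hgen //; case: l l3 => [|[|[|]]]; auto.
apply/eqP; apply: contraTT (aniso m hm) => mn.
by rewrite {2}xmn; apply: horth => //; apply/eqP.
Qed.

Lemma orthogonal_degree_classification : degree_classification N x p.
Proof.
have [/hasP[j0]|/hasPn aniso] := boolP (has (fun j => ~~ dot (x j) (x j)) (iota 3 (N - 3))).
  by rewrite mem_iota_subn //; apply: isotropic_degree_classification.
by apply: anisotropic_degree_classification => j hj; apply/negbNE/aniso; rewrite mem_iota_subn.
Qed.

End Classification.

Theorem proposition5p6 (k : closedFieldType) (hchar : [pchar k] =i pred0)
  (N : nat) (x : nat -> G) (chi : nat -> G -> k) :
  (3 <= N)%N ->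
  x 0%N = gx1 -> x 1%N = gx2 -> x 2%N = gx3 ->
  admissible N x chi ->
  exists s : nat -> nat,
    [/\ forall m, (m < 3)%N -> s m = m,
        forall m, (3 <= m < N)%N -> (3 <= s m < N)%N,
        forall m n, (m < N)%N -> (n < N)%N -> s m = s n -> m = n
      & let y := fun m => x (s m) in
        [\/ (* (1) *)
            [/\ (N <= 6)%N,
                forall m, (3 <= m < N)%N -> y m = x 0%N \/ y m = x 1%N \/ y m = x 2%N
              & forall m n, (3 <= m < N)%N -> (3 <= n < N)%N -> y m = y n -> m = n],
            (* (2) *)
            (5 <= N)%N /\
            exists i j l : nat,
              [/\ [/\ (i < j < 3)%N, (l < 3)%N, l <> i & l <> j],
                  y 3%N = x l,
                  chi i (x i) = chi j (x j)
                & forall m, (4 <= m < N)%N -> y m = mulG (x i) (x j)],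
            (* (3) *)
            (4 <= N)%N /\
            exists i j : nat,
              [/\ (i < j < 3)%N,
                  forall m, (3 <= m < N)%N -> y m = mulG (x i) (x j)
                & chi i (x i) = chi j (x j)]
          | (* (4) *)
            [/\ (4 <= N)%N,
                y 3%N = mulG (x 0%N) (mulG (x 1%N) (x 2%N))
              & exists i j : nat,
                [/\ (i < j < 3)%N,
                    forall m, (4 <= m < N)%N -> y m = mulG (x i) (x j)
                  & chi i (x i) = chi j (x j)]]]].
Proof.
move=> hN hx0 hx1 hx2 adm.
have hgen l : (l < 3)%N -> x l = genG l by case: l => [|[|[|]]] //.
have neg1 : (-1 : k) != 1.
  by rewrite eq_sym -subr_eq0 opprK -mulr2n; have /pcharf0P -> := hchar.
apply: (orthogonal_degree_classification (p := fun i => chi i (x i)) hN hgen).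
- by move=> j /andP[_ jN]; case: adm => _ hne _ _ _; apply/eqP/hne.
- by move=> j j'; apply: (admissible_dot hN hgen adm neg1).
- by move=> i; apply: (admissible_sqr_gen hN hgen adm).
- by move=> j a b; apply: (admissible_pair_eq hN hgen adm).
Qed.
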